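(* For $v>0$ and $\tau\in\mathbb R$, \[ |\lambda(\tfrac12+i\tau,v)|\le\min\big(4,\,2\sqrt v/(|\tau|-v)\big)\quad\text{if }|\tau|>v, \] \[ |\Lambda(\tfrac12+i\tau,v)|\le\min\big(4,\,2\sqrt v/(v-|\tau|)\big)\quad\text{if }|\tau|<v. \]
   Context: For $v>0$ and $0<\Re s<1$: $\lambda(s,v)=\int_0^v e^{it}t^{s-1}\,dt$ and $\Lambda(s,v)=\int_v^\infty e^{it}t^{s-1}\,dt$ (improper integral). *)

From Stdlib Require Import Reals.
From Coquelicot Require Import Coquelicot.
Open Scope R_scope.

Definition cexp (z : C) : C :=
  (exp (Re z) * cos (Im z), exp (Re z) * sin (Im z)).

Definition cpow (t : R) (z : C) : C := cexp (Cmult z (RtoC (ln t))).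

Definition lam_integrand (s : C) (t : R) : C :=
  Cmult (cexp (Cmult Ci (RtoC t))) (cpow t (Cminus s (RtoC 1))).

Definition is_lambda (s : C) (v : R) (l : C) : Prop :=
  is_RInt_gen (V := C_R_NormedModule) (lam_integrand s) (at_right 0) (at_point v) l.

Definition is_Lambda (s : C) (v : R) (l : C) : Prop :=
  is_RInt_gen (V := C_R_NormedModule) (lam_integrand s) (at_point v) (Rbar_locally p_infty) l.

From Stdlib Require Import Reals Lra.
From Coquelicot Require Import Coquelicot.
Open Scope R_scope.

(* For s = 1/2 + i tau the integrand is e^(i phi(t)) / sqrt t with phi(t) = t + tau ln t.
   Since phi'(t) = (t + tau) / t, it equals g(t) (e^(i phi))'(t) / i with
   g(t) = sqrt t / (t + tau), and integrating by parts bounds its integral over [a, b] by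
   |g a| + |g b| + int |g'|.  On (0, |tau|) and on (|tau|, oo) the function g is monotone
   of constant sign, so this is 2 |g b| <= 2 sqrt b / (|tau| - b), resp.
   2 g a <= 2 sqrt a / (a - |tau|).  Together with the trivial bound
   int_a^b dt / sqrt t = 2 sqrt b - 2 sqrt a these estimates make the truncated integrals
   Cauchy, so lambda and Lambda exist, and give the bound 4 after splitting the range at a
   suitable point. *)

Lemma is_derive_pair {V W : NormedModule R_AbsRing} (f : R -> V) (g : R -> W) x df dg :
  is_derive f x df -> is_derive g x dg ->
  is_derive (V := prod_NormedModule R_AbsRing V W) (fun t => (f t, g t)) x (df, dg).
Proof.
  intros Hf Hg.
  apply (filterdiff_comp'_2 f g pair x _ _ (fun u w => (u, w)) Hf Hg).
  apply (filterdiff_ext_lin _ (fun t => t)).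
  - apply filterdiff_ext with (fun t => t); [now intros [] | apply filterdiff_id].
  - now intros [].
Qed.

Lemma continuous_pair {V W : UniformSpace} (f : R -> V) (g : R -> W) x :
  continuous f x -> continuous g x -> continuous (fun t => (f t, g t)) x.
Proof.
  intros Hf Hg. apply (continuous_comp_2 f g pair x Hf Hg).
  apply continuous_ext with (fun p => p); [now intros [] | apply continuous_id].
Qed.

Lemma norm_C (z : C) : @norm R_AbsRing C_R_NormedModule z = Cmod z.
Proof. now rewrite Cmod_norm. Qed.

Lemma Cmod_polar r th : Cmod (r * cos th, r * sin th) = Rabs r.
Proof.
  unfold Cmod; cbn [fst snd]. rewrite <- sqrt_Rsqr_abs. f_equal.
  rewrite <- (Rmult_1_r (Rsqr r)), <- (sin2_cos2 th). unfold Rsqr. ring.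
Qed.

Lemma minus_plus_r {G : AbelianGroup} (x y : G) : minus (plus x y) y = x.
Proof. unfold minus. rewrite <- plus_assoc, (@plus_opp_r G). apply plus_zero_r. Qed.

Lemma minus_plus_l {G : AbelianGroup} (x y : G) : minus (plus x y) x = y.
Proof. rewrite plus_comm. apply minus_plus_r. Qed.

Lemma norm_le_of_filterlim {T} {V : NormedModule R_AbsRing} (F : (T -> Prop) -> Prop)
  {FF : ProperFilter F} (h : T -> V) (l : V) (B : R) :
  filterlim h F (locally l) -> F (fun x => norm (h x) <= B) -> norm l <= B.
Proof.
  intros Hl HB.
  apply (filterlim_le (F := F) (fun x => norm (h x)) (fun _ => B) (norm l) B HB).
  - eapply filterlim_comp; [exact Hl | apply filterlim_norm].
  - apply filterlim_const.
Qed.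

Lemma filterlim_of_increment_bound {V : CompleteNormedModule R_AbsRing}
  (F : (R -> Prop) -> Prop) {FF : ProperFilter F} (h : R -> V) (M : R -> R) (D : R -> Prop) :
  F D -> (forall eps : posreal, F (fun x => M x < eps)) ->
  (forall x y, D x -> D y -> x <= y -> norm (minus (h x) (h y)) <= M x + M y) ->
  exists l, filterlim h F (locally l).
Proof.
  intros HD HM Hinc.
  apply (filterlim_locally_cauchy h). intros eps.
  assert (Heps : 0 < eps / 2) by (destruct eps; simpl; lra).
  exists (fun x => D x /\ M x < eps / 2).
  split; [apply filter_and; [exact HD | exact (HM (mkposreal _ Heps))]|].
  intros x y [Dx Mx] [Dy My].
  apply (@norm_compat1 R_AbsRing (CompleteNormedModule.NormedModule R_AbsRing V)).
  destruct (Rle_or_lt y x) as [Hyx | Hxy].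
  - eapply Rle_lt_trans; [exact (Hinc y x Dy Dx Hyx) | lra].
  - rewrite <- norm_opp, opp_minus.
    eapply Rle_lt_trans; [exact (Hinc x y Dx Dy (Rlt_le _ _ Hxy)) | lra].
Qed.

Lemma is_RInt_gen_of_filterlim_l {V : NormedModule R_AbsRing} (f : R -> V)
  (Fa : (R -> Prop) -> Prop) {FF : Filter Fa} (b : R) (h : R -> V) (l : V) :
  Fa (fun a => is_RInt f a b (h a)) -> filterlim h Fa (locally l) ->
  is_RInt_gen f Fa (at_point b) l.
Proof.
  intros Hh Hl.
  apply (filterlimi_lim_ext_loc (fun ab : R * R => h (fst ab))).
  - apply (Filter_prod _ _ _ _ (fun y => y = b) Hh); [reflexivity|].
    now intros x y Hx ->.
  - eapply filterlim_comp; [apply filterlim_fst | exact Hl].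
Qed.

Lemma is_RInt_gen_of_filterlim_r {V : NormedModule R_AbsRing} (f : R -> V)
  (Fb : (R -> Prop) -> Prop) {FF : Filter Fb} (a : R) (h : R -> V) (l : V) :
  Fb (fun b => is_RInt f a b (h b)) -> filterlim h Fb (locally l) ->
  is_RInt_gen f (at_point a) Fb l.
Proof.
  intros Hh Hl.
  apply (filterlimi_lim_ext_loc (fun ab : R * R => h (snd ab))).
  - apply (Filter_prod _ _ _ (fun x => x = a) _ (eq_refl a) Hh).
    now intros x y -> Hy.
  - eapply filterlim_comp; [apply filterlim_snd | exact Hl].
Qed.

Section ImproperIntegrals.

Context {V : CompleteNormedModule R_AbsRing} (f : R -> V) (M : R -> R) (v B : R).

Lemma is_RInt_gen_at_right_0_bound :
  0 < v ->
  (forall u w, 0 < u -> u <= w -> w <= v -> ex_RInt f u w) ->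
  (forall u w, 0 < u -> u <= w -> w <= v -> norm (RInt f u w) <= M w) ->
  (forall eps : posreal, at_right 0 (fun w => M w < eps)) ->
  (forall a, 0 < a -> a <= v -> norm (RInt f a v) <= B) ->
  exists l, is_RInt_gen f (at_right 0) (at_point v) l /\ norm l <= B.
Proof.
  intros hv Hex Hinc HM HB.
  set (D := fun a => 0 < a <= v).
  assert (HD : at_right 0 D).
  { exists (mkposreal v hv). intros y Hy Hy0. split; [exact Hy0|].
    apply Rabs_lt_between in Hy. rewrite Rminus_0_r in Hy. simpl in Hy. lra. }
  assert (Hchasles : forall u w, D u -> D w -> u <= w ->
            minus (RInt f u v) (RInt f w v) = RInt f u w).
  { intros u w [Hu Hu'] [Hw Hw'] Huw.
    rewrite <- (RInt_Chasles f u w v) by (apply Hex; lra). exact (minus_plus_r _ _). }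
  destruct (filterlim_of_increment_bound (at_right 0) (fun a => RInt f a v) M D HD HM)
    as [l Hl].
  { intros x y Dx Dy Hxy. rewrite Hchasles by assumption.
    destruct Dx, Dy.
    assert (0 <= M x).
    { apply Rle_trans with (2 := Hinc x x ltac:(lra) (Rle_refl x) ltac:(lra)). apply norm_ge_0. }
    specialize (Hinc x y ltac:(lra) Hxy ltac:(lra)). lra. }
  exists l. split.
  - apply (is_RInt_gen_of_filterlim_l f _ v (fun a => RInt f a v) l); [|exact Hl].
    apply (filter_imp D); [|exact HD]. intros a [Ha Ha'].
    apply RInt_correct, Hex; lra.
  - apply (norm_le_of_filterlim _ _ l B Hl).
    apply (filter_imp D); [|exact HD]. intros a [Ha Ha']. now apply HB.
Qed.

Lemma is_RInt_gen_at_p_infty_bound :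
  (forall X Y, v <= X -> X <= Y -> ex_RInt f X Y) ->
  (forall X Y, v <= X -> X <= Y -> norm (RInt f X Y) <= M X) ->
  (forall eps : posreal, Rbar_locally p_infty (fun X => M X < eps)) ->
  (forall X, v <= X -> norm (RInt f v X) <= B) ->
  exists l, is_RInt_gen f (at_point v) (Rbar_locally p_infty) l /\ norm l <= B.
Proof.
  intros Hex Hinc HM HB.
  set (D := fun X => v <= X).
  assert (HD : Rbar_locally p_infty D) by (exists v; intros; unfold D; lra).
  destruct (filterlim_of_increment_bound (Rbar_locally p_infty) (fun X => RInt f v X) M D HD HM)
    as [l Hl].
  { intros x y Dx Dy Hxy. unfold D in *.
    rewrite <- (RInt_Chasles f v x y) by (apply Hex; lra).
    rewrite <- norm_opp, opp_minus, (minus_plus_l (G := CompleteNormedModule.AbelianGroup R_AbsRing V)).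
    assert (0 <= M y).
    { apply Rle_trans with (2 := Hinc y y Dy (Rle_refl y)). apply norm_ge_0. }
    specialize (Hinc x y Dx Hxy). lra. }
  exists l. split.
  - apply (is_RInt_gen_of_filterlim_r f _ v (fun X => RInt f v X) l); [|exact Hl].
    apply (filter_imp D); [|exact HD]. intros X HX.
    apply RInt_correct, Hex; unfold D in *; lra.
  - apply (norm_le_of_filterlim _ _ l B Hl).
    apply (filter_imp D); [|exact HD]. exact HB.
Qed.

End ImproperIntegrals.

Section IntegrationByParts.

Context (g dg : R -> R) (a b : R).
Hypothesis (Hab : a <= b).
Hypothesis (Hg : forall t, a <= t <= b -> is_derive g t (dg t)).
Hypothesis (Hdg : forall t, a <= t <= b -> continuous dg t).

Let in_segment t : Rmin a b <= t <= Rmax a b -> a <= t <= b.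
Proof. now rewrite Rmin_left, Rmax_right. Qed.

Lemma is_RInt_derive_segment : is_RInt dg a b (g b - g a).
Proof.
  apply (is_RInt_derive g dg); intros t Ht; [apply Hg | apply Hdg]; now apply in_segment.
Qed.

Lemma is_RInt_Rabs_derive_nonneg :
  (forall t, a <= t <= b -> 0 <= dg t) -> is_RInt (fun t => Rabs (dg t)) a b (g b - g a).
Proof.
  intros Hpos. apply (is_RInt_ext dg); [|exact is_RInt_derive_segment].
  intros t Ht. symmetry. apply Rabs_pos_eq, Hpos, in_segment. lra.
Qed.

Lemma is_RInt_Rabs_derive_nonpos :
  (forall t, a <= t <= b -> dg t <= 0) -> is_RInt (fun t => Rabs (dg t)) a b (g a - g b).
Proof.
  intros Hneg. apply (is_RInt_ext (fun t => opp (dg t))).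
  - intros t Ht. symmetry. apply Rabs_left1, Hneg, in_segment. lra.
  - replace (g a - g b) with (opp (g b - g a)) by (unfold opp; simpl; ring).
    apply (is_RInt_opp (V := R_NormedModule)), is_RInt_derive_segment.
Qed.

Lemma norm_RInt_scal_derive_le {V : CompleteNormedModule R_AbsRing} (G dG : R -> V) (w : R) :
  (forall t, a <= t <= b -> is_derive G t (dG t)) ->
  (forall t, a <= t <= b -> continuous dG t) ->
  (forall t, a <= t <= b -> norm (G t) <= 1) ->
  is_RInt (fun t => Rabs (dg t)) a b w ->
  exists I, is_RInt (fun t => scal (g t) (dG t)) a b I /\
    norm I <= Rabs (g a) + Rabs (g b) + w.
Proof.
  intros HG HdG HG1 Hw.
  assert (Hscal : forall (k : R) (x : V), norm x <= 1 -> norm (scal k x) <= Rabs k).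
  { intros k x Hx. eapply Rle_trans; [apply (norm_scal (K := R_AbsRing) (V := V))|].
    rewrite <- (Rmult_1_r (Rabs k)). apply Rmult_le_compat_l; [apply Rabs_pos | exact Hx]. }
  assert (HJ : ex_RInt (fun t => scal (dg t) (G t)) a b).
  { apply ex_RInt_continuous. intros t Ht. apply in_segment in Ht.
    apply (continuous_scal dg G); [apply Hdg, Ht|].
    apply ex_derive_continuous. exists (dG t). now apply HG. }
  set (J := RInt (fun t => scal (dg t) (G t)) a b).
  exists (minus (minus (scal (g b) (G b)) (scal (g a) (G a))) J). split.
  - apply (is_RInt_scal_derive_r g G dg dG a b J).
    1-4: intros t Ht; apply in_segment in Ht; auto.
    exact (RInt_correct _ _ _ HJ).
  - assert (HJw : norm J <= w).
    { apply (norm_RInt_le (fun t => scal (dg t) (G t)) (fun t => Rabs (dg t)) a b J w Hab);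
        [| exact (RInt_correct _ _ _ HJ) | exact Hw].
      intros t Ht. now apply Hscal, HG1. }
    assert (Ha := Hscal (g a) (G a) (HG1 a ltac:(lra))).
    assert (Hb := Hscal (g b) (G b) (HG1 b ltac:(lra))).
    unfold minus.
    eapply Rle_trans; [apply (norm_triangle (K := R_AbsRing) (V := V))|].
    eapply Rle_trans; [apply Rplus_le_compat_r, (norm_triangle (K := R_AbsRing) (V := V))|].
    rewrite !(norm_opp (K := R_AbsRing) (V := V)). lra.
Qed.

End IntegrationByParts.

Ltac subst_sqrt t :=
  let Hs := fresh in let Et := fresh in
  assert (Hs : 0 < sqrt t) by (apply sqrt_lt_R0; lra);
  assert (Et : sqrt t * sqrt t = t) by (apply sqrt_sqrt; lra);
  set (s := sqrt t) in *; clearbody s; subst t.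

Lemma norm_RInt_le_sqrt {V : NormedModule R_AbsRing} (f : R -> V) (a b : R) (I : V) :
  0 < a -> a <= b -> (forall t, a <= t <= b -> norm (f t) <= / sqrt t) ->
  is_RInt f a b I -> norm I <= 2 * sqrt b - 2 * sqrt a.
Proof.
  intros ha hab Hf HI.
  apply (norm_RInt_le f (fun t => / sqrt t) a b I _ hab Hf HI).
  apply (is_RInt_derive (fun t => 2 * sqrt t)); intros t Ht;
    rewrite Rmin_left, Rmax_right in Ht by exact hab.
  - auto_derive; [lra |]. subst_sqrt t. field. lra.
  - apply (@ex_derive_continuous R_AbsRing R_NormedModule).
    assert (0 < sqrt t) by (apply sqrt_lt_R0; lra).
    auto_derive. repeat split; lra.
Qed.

Definition phase (tau t : R) := t + tau * ln t.
Definition phase' (tau t : R) := 1 + tau / t.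

Definition lam_half (tau : R) := lam_integrand ((1/2, tau) : C).

Lemma lam_half_polar tau t : 0 < t ->
  lam_half tau t = (/ sqrt t * cos (phase tau t), / sqrt t * sin (phase tau t)).
Proof.
  intros ht.
  assert (Hsqrt : exp (/ 2 * ln t) = sqrt t) by exact (Rpower_sqrt t ht).
  unfold lam_half, lam_integrand, cexp, cpow, Cmult, Cminus, Cplus, Copp, Ci, RtoC, Re, Im, phase.
  simpl.
  replace ((1 / 2 + - (1)) * ln t - (tau + - 0) * 0) with (- (/ 2 * ln t)) by field.
  replace ((1 / 2 + - (1)) * 0 + (tau + - 0) * ln t) with (tau * ln t) by ring.
  replace (0 * t - 1 * 0) with 0 by ring.
  replace (0 * 0 + 1 * t) with t by ring.
  rewrite exp_Ropp, Hsqrt, exp_0, cos_plus, sin_plus.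
  f_equal; ring.
Qed.

Lemma Cmod_lam_half tau t : 0 < t -> Cmod (lam_half tau t) = / sqrt t.
Proof.
  intros ht. rewrite lam_half_polar, Cmod_polar by exact ht.
  apply Rabs_pos_eq, Rlt_le, Rinv_0_lt_compat, sqrt_lt_R0, ht.
Qed.

Lemma continuous_lam_half tau t : 0 < t -> continuous (lam_half tau) t.
Proof.
  intros ht.
  unfold lam_half, lam_integrand, cexp, cpow, Cmult, Cminus, Cplus, Copp, Ci, RtoC, Re, Im.
  simpl.
  apply continuous_pair; apply (@ex_derive_continuous R_AbsRing R_NormedModule); auto_derive; auto.
Qed.

(* [phase_vector] is [-i e^(i phase)], so its derivative [phase_vector'] is
   [phase' e^(i phase)], and [lam_half_scal] writes the integrand as [amplitude] times it. *)
Definition phase_vector (tau t : R) : C := (sin (phase tau t), - cos (phase tau t)).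

Lemma Cmod_phase_vector tau t : Cmod (phase_vector tau t) = 1.
Proof.
  unfold Cmod, phase_vector; cbn [fst snd]. rewrite <- sqrt_1. f_equal.
  rewrite <- (sin2_cos2 (phase tau t)). unfold Rsqr. ring.
Qed.

Definition phase_vector' (tau t : R) : C :=
  (phase' tau t * cos (phase tau t), phase' tau t * sin (phase tau t)).

Lemma is_derive_phase_vector tau t : 0 < t ->
  is_derive (V := C_R_NormedModule) (phase_vector tau) t (phase_vector' tau t).
Proof.
  intros ht. unfold phase_vector, phase_vector', phase'.
  apply (is_derive_pair (V := R_NormedModule) (W := R_NormedModule)); unfold phase;
    auto_derive; auto; field; lra.
Qed.

Lemma continuous_phase_vector' tau t : 0 < t ->
  continuous (U := C_R_NormedModule) (phase_vector' tau) t.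
Proof.
  intros ht. unfold phase_vector', phase', phase.
  apply continuous_pair; apply (@ex_derive_continuous R_AbsRing R_NormedModule);
    auto_derive; repeat split; lra.
Qed.

Definition amplitude (tau t : R) := sqrt t / (t + tau).
Definition amplitude' (tau t : R) := (tau - t) / (2 * sqrt t * (t + tau) ^ 2).

Lemma is_derive_amplitude tau t : 0 < t -> t + tau <> 0 ->
  is_derive (amplitude tau) t (amplitude' tau t).
Proof.
  intros ht hn. unfold amplitude, amplitude'.
  auto_derive; [auto |]. subst_sqrt t. field. lra.
Qed.

Lemma continuous_amplitude' tau t : 0 < t -> t + tau <> 0 ->
  continuous (amplitude' tau) t.
Proof.
  intros ht hn. apply (@ex_derive_continuous R_AbsRing R_NormedModule). unfold amplitude'.
  assert (0 < sqrt t) by (apply sqrt_lt_R0, ht).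
  auto_derive. repeat split; auto.
  repeat apply Rmult_integral_contrapositive_currified; auto; lra.
Qed.

Lemma amplitude'_pos_denominator tau t : 0 < t -> t + tau <> 0 ->
  0 < 2 * sqrt t * (t + tau) ^ 2.
Proof.
  intros ht hn. apply Rmult_lt_0_compat.
  - assert (0 < sqrt t) by (apply sqrt_lt_R0, ht). lra.
  - rewrite <- Rsqr_pow2. apply Rlt_0_sqr, hn.
Qed.

Lemma amplitude'_nonneg tau t : 0 < t -> t + tau <> 0 -> t <= tau -> 0 <= amplitude' tau t.
Proof.
  intros ht hn Ht. unfold amplitude', Rdiv.
  assert (0 < / (2 * sqrt t * (t + tau) ^ 2))
    by (apply Rinv_0_lt_compat, amplitude'_pos_denominator; assumption).
  nra.
Qed.

Lemma amplitude'_nonpos tau t : 0 < t -> t + tau <> 0 -> tau <= t -> amplitude' tau t <= 0.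
Proof.
  intros ht hn Ht. unfold amplitude', Rdiv.
  assert (0 < / (2 * sqrt t * (t + tau) ^ 2))
    by (apply Rinv_0_lt_compat, amplitude'_pos_denominator; assumption).
  nra.
Qed.

Lemma lam_half_scal tau t : 0 < t -> t + tau <> 0 ->
  lam_half tau t = scal (amplitude tau t) (phase_vector' tau t).
Proof.
  intros ht hn. rewrite lam_half_polar by exact ht.
  unfold scal; simpl; unfold prod_scal, scal; simpl; unfold mult; simpl.
  unfold amplitude, phase'. subst_sqrt t. f_equal; field; lra.
Qed.

Local Notation RInt_C := (RInt (V := C_R_CompleteNormedModule)).

Lemma ex_RInt_lam_half tau a b : 0 < a -> a <= b ->
  ex_RInt (V := C_R_CompleteNormedModule) (lam_half tau) a b.
Proof.
  intros ha hab. apply ex_RInt_continuous. intros t Ht.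
  rewrite Rmin_left, Rmax_right in Ht by exact hab.
  apply continuous_lam_half. lra.
Qed.

Lemma Cmod_RInt_lam_half_le_sqrt tau a b : 0 < a -> a <= b ->
  Cmod (RInt_C (lam_half tau) a b) <= 2 * sqrt b - 2 * sqrt a.
Proof.
  intros ha hab. rewrite <- (norm_C (RInt_C (lam_half tau) a b)).
  apply (norm_RInt_le_sqrt (V := C_R_NormedModule) (lam_half tau) a b _ ha hab).
  - intros t Ht. rewrite norm_C, Cmod_lam_half by lra. apply Rle_refl.
  - apply (RInt_correct (V := C_R_CompleteNormedModule)), ex_RInt_lam_half; assumption.
Qed.

Lemma Cmod_RInt_lam_half_le_amplitude tau a b (w : R) : 0 < a -> a <= b ->
  (forall t, a <= t <= b -> t + tau <> 0) ->
  is_RInt (fun t => Rabs (amplitude' tau t)) a b w ->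
  Cmod (RInt_C (lam_half tau) a b) <= Rabs (amplitude tau a) + Rabs (amplitude tau b) + w.
Proof.
  intros ha hab hn Hw.
  destruct (norm_RInt_scal_derive_le (V := C_R_CompleteNormedModule) (amplitude tau)
              (amplitude' tau) a b hab
              (fun t Ht => is_derive_amplitude tau t ltac:(lra) (hn t Ht))
              (fun t Ht => continuous_amplitude' tau t ltac:(lra) (hn t Ht))
              (phase_vector tau) (phase_vector' tau) w
              (fun t Ht => is_derive_phase_vector tau t ltac:(lra))
              (fun t Ht => continuous_phase_vector' tau t ltac:(lra))
              (fun t Ht => Req_le _ _ (eq_trans (norm_C _) (Cmod_phase_vector tau t))) Hw)
    as [I [HI HIle]].
  rewrite <- (norm_C (RInt_C (lam_half tau) a b)).
  replace (RInt_C (lam_half tau) a b) with I; [exact HIle |].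
  symmetry. apply is_RInt_unique.
  apply (is_RInt_ext (fun t => scal (amplitude tau t) (phase_vector' tau t))); [| exact HI].
  intros t Ht. rewrite Rmin_left, Rmax_right in Ht by exact hab.
  symmetry. apply lam_half_scal; [| apply hn]; lra.
Qed.

Lemma Cmod_RInt_lam_half_below tau a b : 0 < a -> a <= b -> b < Rabs tau ->
  Cmod (RInt_C (lam_half tau) a b) <= 2 * sqrt b / (Rabs tau - b).
Proof.
  intros ha hab hb.
  assert (Hsb : 0 < sqrt b) by (apply sqrt_lt_R0; lra).
  destruct (Rle_or_lt 0 tau) as [Htau | Htau].
  - rewrite Rabs_pos_eq in hb |- * by exact Htau.
    assert (hn : forall t, a <= t <= b -> t + tau <> 0) by (intros; lra).
    assert (Hw := is_RInt_Rabs_derive_nonneg (amplitude tau) (amplitude' tau) a b hab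
      (fun t Ht => is_derive_amplitude tau t ltac:(lra) (hn t Ht))
      (fun t Ht => continuous_amplitude' tau t ltac:(lra) (hn t Ht))
      (fun t Ht => amplitude'_nonneg tau t ltac:(lra) (hn t Ht) ltac:(lra))).
    eapply Rle_trans; [exact (Cmod_RInt_lam_half_le_amplitude tau a b _ ha hab hn Hw)|].
    unfold amplitude.
    rewrite !Rabs_pos_eq by (apply Rdiv_le_0_compat; [apply sqrt_pos | lra]).
    assert (sqrt b / (b + tau) <= sqrt b / (tau - b)).
    { apply Rmult_le_compat_l; [lra|]. apply Rinv_le_contravar; lra. }
    unfold Rdiv in *. lra.
  - rewrite Rabs_left in hb |- * by exact Htau.
    assert (hn : forall t, a <= t <= b -> t + tau <> 0) by (intros; lra).
    assert (Hw := is_RInt_Rabs_derive_nonpos (amplitude tau) (amplitude' tau) a b hab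
      (fun t Ht => is_derive_amplitude tau t ltac:(lra) (hn t Ht))
      (fun t Ht => continuous_amplitude' tau t ltac:(lra) (hn t Ht))
      (fun t Ht => amplitude'_nonpos tau t ltac:(lra) (hn t Ht) ltac:(lra))).
    eapply Rle_trans; [exact (Cmod_RInt_lam_half_le_amplitude tau a b _ ha hab hn Hw)|].
    unfold amplitude.
    replace (sqrt a / (a + tau)) with (- (sqrt a / (- tau - a))) by (field; lra).
    replace (sqrt b / (b + tau)) with (- (sqrt b / (- tau - b))) by (field; lra).
    rewrite !Rabs_Ropp, !Rabs_pos_eq by (apply Rdiv_le_0_compat; [apply sqrt_pos | lra]).
    unfold Rdiv in *. lra.
Qed.

Lemma Cmod_RInt_lam_half_above tau a b : Rabs tau < a -> a <= b ->
  Cmod (RInt_C (lam_half tau) a b) <= 2 * sqrt a / (a - Rabs tau).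
Proof.
  intros ha hab.
  assert (Htau := Rabs_def2 _ _ ha).
  assert (Hsa : 0 < sqrt a) by (apply sqrt_lt_R0; lra).
  assert (hn : forall t, a <= t <= b -> t + tau <> 0) by (intros; lra).
  assert (Hw := is_RInt_Rabs_derive_nonpos (amplitude tau) (amplitude' tau) a b hab
    (fun t Ht => is_derive_amplitude tau t ltac:(lra) (hn t Ht))
    (fun t Ht => continuous_amplitude' tau t ltac:(lra) (hn t Ht))
    (fun t Ht => amplitude'_nonpos tau t ltac:(lra) (hn t Ht) ltac:(lra))).
  eapply Rle_trans; [exact (Cmod_RInt_lam_half_le_amplitude tau a b _ ltac:(lra) hab hn Hw)|].
  unfold amplitude.
  rewrite !Rabs_pos_eq by (apply Rdiv_le_0_compat; [apply sqrt_pos | lra]).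
  assert (sqrt a / (a + tau) <= sqrt a / (a - Rabs tau)).
  { apply Rmult_le_compat_l; [lra|]. apply Rinv_le_contravar; [lra|].
    pose proof (Rle_abs (- tau)). rewrite Rabs_Ropp in *. lra. }
  unfold Rdiv in *. lra.
Qed.

Lemma Cmod_RInt_lam_half_Chasles tau a b c : 0 < a -> a <= b -> b <= c ->
  Cmod (RInt_C (lam_half tau) a c) <=
  Cmod (RInt_C (lam_half tau) a b) + Cmod (RInt_C (lam_half tau) b c).
Proof.
  intros ha hab hbc.
  rewrite <- (RInt_Chasles (V := C_R_CompleteNormedModule) (lam_half tau) a b c)
    by (apply ex_RInt_lam_half; lra).
  apply Cmod_triangle.
Qed.

Lemma Cmod_RInt_lam_half_near_0 tau a v : 0 < a -> a <= v -> v < Rabs tau ->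
  Cmod (RInt_C (lam_half tau) a v) <= Rmin 4 (2 * sqrt v / (Rabs tau - v)).
Proof.
  intros ha hav hv.
  apply Rmin_glb; [| exact (Cmod_RInt_lam_half_below tau a v ha hav hv)].
  (* Split at [x ^ 2], where [x ^ 2 + 2 x = v] makes the oscillation bound on [a, x ^ 2] at most 1. *)
  set (x := sqrt (1 + v) - 1).
  assert (Hx1 : 1 < sqrt (1 + v)) by (rewrite <- sqrt_1 at 1; apply sqrt_lt_1; lra).
  assert (Hx2 : sqrt (1 + v) * sqrt (1 + v) = 1 + v) by (apply sqrt_sqrt; lra).
  assert (Hx : 0 < x) by (unfold x; lra).
  assert (Hxv : x ^ 2 + 2 * x = v) by (unfold x; nra).
  assert (Hsx : sqrt (x ^ 2) = x) by (apply sqrt_pow2; lra).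
  assert (Hsv : sqrt v <= x + 1) by (unfold x; apply Rlt_le; ring_simplify; apply sqrt_lt_1; lra).
  destruct (Rle_or_lt a (x ^ 2)) as [Has | Has].
  - eapply Rle_trans; [apply (Cmod_RInt_lam_half_Chasles tau a (x ^ 2) v); nra|].
    assert (H1 := Cmod_RInt_lam_half_below tau a (x ^ 2) ha Has ltac:(nra)).
    assert (H2 := Cmod_RInt_lam_half_le_sqrt tau (x ^ 2) v ltac:(nra) ltac:(nra)).
    rewrite Hsx in H1, H2.
    assert (2 * x / (Rabs tau - x ^ 2) <= 1).
    { unfold Rdiv. rewrite <- (Rinv_r (2 * x)) by lra.
      apply Rmult_le_compat_l; [lra|]. apply Rinv_le_contravar; lra. }
    lra.
  - assert (Hsa : x <= sqrt a) by (rewrite <- Hsx; apply sqrt_le_1; nra).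
    assert (H := Cmod_RInt_lam_half_le_sqrt tau a v ha hav). lra.
Qed.

Lemma Cmod_RInt_lam_half_from_v tau v X : Rabs tau < v -> v <= X ->
  Cmod (RInt_C (lam_half tau) v X) <= Rmin 4 (2 * sqrt v / (v - Rabs tau)).
Proof.
  intros hv hvX.
  assert (Htau := Rabs_pos tau).
  apply Rmin_glb; [| exact (Cmod_RInt_lam_half_above tau v X hv hvX)].
  (* Split at [c], where both the trivial bound on [v, c] and the oscillation bound on [c, X] are 2. *)
  set (c := (sqrt v + 1) ^ 2).
  assert (Hs := sqrt_lt_R0 v ltac:(lra)).
  assert (Hsc : sqrt c = sqrt v + 1) by (apply sqrt_pow2; lra).
  assert (Hc : c = v + 2 * sqrt v + 1).
  { unfold c. assert (sqrt v * sqrt v = v) by (apply sqrt_sqrt; lra). nra. }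
  destruct (Rle_or_lt c X) as [HcX | HcX].
  - eapply Rle_trans; [apply (Cmod_RInt_lam_half_Chasles tau v c X); lra|].
    assert (H1 := Cmod_RInt_lam_half_le_sqrt tau v c ltac:(lra) ltac:(lra)).
    assert (H2 := Cmod_RInt_lam_half_above tau c X ltac:(lra) HcX).
    rewrite Hsc in H1, H2.
    assert (2 * (sqrt v + 1) / (c - Rabs tau) <= 2).
    { unfold Rdiv. apply Rle_trans with (2 * (sqrt v + 1) * / (sqrt v + 1)).
      - apply Rmult_le_compat_l; [lra|]. apply Rinv_le_contravar; lra.
      - rewrite Rmult_assoc, Rinv_r by lra. lra. }
    lra.
  - assert (Hsx : sqrt X <= sqrt v + 1) by (rewrite <- Hsc; apply sqrt_le_1; lra).
    assert (H := Cmod_RInt_lam_half_le_sqrt tau v X ltac:(lra) hvX). lra.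
Qed.

Lemma lambda_half_bound tau v : 0 < v -> v < Rabs tau ->
  exists l : C, is_lambda ((1/2, tau) : C) v l /\
    Cmod l <= Rmin 4 (2 * sqrt v / (Rabs tau - v)).
Proof.
  intros hv hvt.
  destruct (is_RInt_gen_at_right_0_bound (V := C_R_CompleteNormedModule) (lam_half tau)
              (fun w => 2 * sqrt w) v (Rmin 4 (2 * sqrt v / (Rabs tau - v))) hv)
    as [l [Hl Hle]].
  - intros u w hu huw hw. apply ex_RInt_lam_half; assumption.
  - intros u w hu huw hw. rewrite norm_C.
    assert (H := Cmod_RInt_lam_half_le_sqrt tau u w hu huw).
    assert (0 <= sqrt u) by apply sqrt_pos. lra.
  - intros eps. assert (He : 0 < (eps / 2) ^ 2) by (apply pow_lt; destruct eps; simpl; lra).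
    exists (mkposreal _ He). intros w Hw Hw0. simpl in Hw.
    apply Rabs_lt_between in Hw. rewrite Rminus_0_r in Hw.
    assert (sqrt w < eps / 2); [|lra].
    rewrite <- (sqrt_pow2 (eps / 2)) by (destruct eps; simpl; lra).
    apply sqrt_lt_1; lra.
  - intros a ha hav. rewrite norm_C. apply Cmod_RInt_lam_half_near_0; lra.
  - exists l. split; [exact Hl | now rewrite <- norm_C].
Qed.

Lemma Lambda_half_bound tau v : Rabs tau < v ->
  exists l : C, is_Lambda ((1/2, tau) : C) v l /\
    Cmod l <= Rmin 4 (2 * sqrt v / (v - Rabs tau)).
Proof.
  intros hvt. assert (Htau := Rabs_pos tau).
  destruct (is_RInt_gen_at_p_infty_bound (V := C_R_CompleteNormedModule) (lam_half tau)
              (fun X => 2 * sqrt X / (X - Rabs tau)) v (Rmin 4 (2 * sqrt v / (v - Rabs tau))))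
    as [l [Hl Hle]].
  - intros X Y hX hXY. apply ex_RInt_lam_half; lra.
  - intros X Y hX hXY. rewrite norm_C. apply Cmod_RInt_lam_half_above; lra.
  - intros eps. set (k := 4 / eps).
    assert (Hk : 0 < k) by (unfold k; destruct eps; simpl; apply Rdiv_lt_0_compat; lra).
    exists (2 * Rabs tau + k ^ 2). intros X HX.
    assert (HkX : k < sqrt X).
    { rewrite <- (sqrt_pow2 k) by lra. apply sqrt_lt_1; nra. }
    assert (EX : sqrt X * sqrt X = X) by (apply sqrt_sqrt; nra).
    assert (Hd : 0 < X - Rabs tau) by nra.
    apply (Rmult_lt_reg_r (X - Rabs tau)); [exact Hd|].
    unfold Rdiv. rewrite Rmult_assoc, Rinv_l, Rmult_1_r by lra.
    assert (eps * k = 4) by (unfold k; destruct eps; simpl; field; lra).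
    nra.
  - intros X hX. rewrite norm_C. apply Cmod_RInt_lam_half_from_v; lra.
  - exists l. split; [exact Hl | now rewrite <- norm_C].
Qed.

Theorem proposition8 (v tau : R) (hv : 0 < v) :
  (Rabs tau > v ->
     exists l : C, is_lambda ((1/2, tau) : C) v l /\
       Cmod l <= Rmin 4 (2 * sqrt v / (Rabs tau - v))) /\
  (Rabs tau < v ->
     exists l : C, is_Lambda ((1/2, tau) : C) v l /\
       Cmod l <= Rmin 4 (2 * sqrt v / (v - Rabs tau))).
Proof.
  split; intros H.
  - exact (lambda_half_bound tau v hv H).
  - exact (Lambda_half_bound tau v H).
Qed.
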